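(* Let $\pi^m_{k+1}(\cdot|s,\mathbf{a}^{1:m-1})\propto\exp\{\beta_k^{-1}Q^{1:m}_{\boldsymbol{\pi}_{\theta_k}}(s,\mathbf{a}^{1:m-1},\cdot)+\phi^\top(s,\mathbf{a}^{1:m-1},\cdot)\theta_k^m\}$ be the ideal update, $\pi_{\theta^m_{k+1}}$ the log-linear policy with parameter $\theta^m_{k+1}$, and $\pi_{\theta^m_k}$ the current log-linear policy. Then for any $(s,\mathbf{a}^{1:m-1})\in\mathcal{S}\times\mathcal{A}^{m-1}$ (suppressed from notation below), $$ \begin{aligned} &\mathrm{KL}(\pi_*^m\|\pi_{\theta^m_{k+1}})-\mathrm{KL}(\pi_*^m\|\pi_{\theta^m_k})\\ &\le\Big\langle\log\frac{\pi_{\theta^m_{k+1}}}{\pi^m_{k+1}},\ \pi_{\theta^m_k}-\pi_*^m\Big\rangle+\frac{1}{\beta_k}\big\langle A^m_{\boldsymbol{\pi}_{\theta_k}}(s,\mathbf{a}^{1:m-1},\cdot),\ \pi_{\theta^m_k}-\pi_*^m\big\rangle-\frac12\big\|\pi_{\theta^m_{k+1}}-\pi_{\theta^m_k}\big\|_1^2\\ &\quad-\big\langle(\theta^m_{k+1}-\theta^m_k)^\top\phi(s,\mathbf{a}^{1:m-1},\cdot),\ \pi_{\theta^m_k}-\pi_{\theta^m_{k+1}}\big\rangle. \end{aligned} $$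
   Context: Fully cooperative Markov game with agents $\{1,\dots,N\}$, finite state space $\mathcal{S}$, finite individual action space $\mathcal{A}$. Joint policies in sequential conditional form $\boldsymbol{\pi}(\mathbf{a}|s)=\prod_m\pi^m(a^m|s,\mathbf{a}^{1:m-1})$. $Q^{1:m}_{\boldsymbol{\pi}}(s,\mathbf{a}^{1:m})$ is the expected joint action-value given $\mathbf{a}^{1:m}$ when the remaining agents follow $\boldsymbol{\pi}$, and the multi-agent advantage of agent $m$ is $A^m_{\boldsymbol{\pi}}(s,\mathbf{a}^{1:m-1},a^m)=Q^{1:m}_{\boldsymbol{\pi}}(s,\mathbf{a}^{1:m})-Q^{1:m-1}_{\boldsymbol{\pi}}(s,\mathbf{a}^{1:m-1})$. Log-linear policies $\pi_{\theta^m}(a^m|s,\mathbf{a}^{1:m-1})\propto\exp(\phi^\top(s,\mathbf{a}^{1:m-1},a^m)\theta^m)$. $\boldsymbol{\pi}_{\theta_k}$ is the current joint policy with parameters $\theta_k^1,\dots,\theta_k^N$; $\theta^m_{k+1}\in\mathbb{R}^d$ arbitrary; $\beta_k>0$; $\pi_*^m$ is agent $m$'s conditional policy in an optimal joint policy $\boldsymbol{\pi}_*$. $\langle\cdot,\cdot\rangle$ is the inner product over $\mathcal{A}$ and $\mathrm{KL}$ the Kullback–Leibler divergence. *)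

From HB Require Import structures.
From mathcomp Require Import all_boot all_order all_algebra.
From mathcomp Require Import all_classical all_reals all_analysis.
Set Implicit Arguments. Unset Strict Implicit. Unset Printing Implicit Defensive.
Import Order.TTheory GRing.Theory Num.Theory.
Local Open Scope ring_scope.

(* A per-agent "context" is a pair (s, a^{1:m-1}) with s : S and the prefix of
   actions of the preceding agents given as a sequence of length m-1. *)

Section Defs.
Variables (R : realType) (S A : finType) (d : nat).

Definition dotf (theta v : 'I_d -> R) : R := \sum_(i < d) v i * theta i.

Definition loglin (phi : S -> seq A -> A -> 'I_d -> R) (theta : 'I_d -> R)
  (s : S) (pre : seq A) (a : A) : R :=
  expR (dotf theta (phi s pre a)) / \sum_(b : A) expR (dotf theta (phi s pre b)).

Definition ideal_update (beta : R) (Q : S -> seq A -> A -> R)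
  (phi : S -> seq A -> A -> 'I_d -> R) (theta : 'I_d -> R)
  (s : S) (pre : seq A) (a : A) : R :=
  expR (Q s pre a / beta + dotf theta (phi s pre a)) /
  \sum_(b : A) expR (Q s pre b / beta + dotf theta (phi s pre b)).

Definition advantage (Qm : S -> seq A -> A -> R) (Qm1 : S -> seq A -> R)
  (s : S) (pre : seq A) (a : A) : R := Qm s pre a - Qm1 s pre.
End Defs.

Section Vec.
Variables (R : realType) (A : finType).
Definition inner (f g : A -> R) : R := \sum_(a : A) f a * g a.
(* KL(p || q), with the convention 0 * log(0/q) = 0 (ln 0 = 0 in mathcomp) *)
Definition KL (p q : A -> R) : R := \sum_(a : A) p a * ln (p a / q a).
Definition l1dist (p q : A -> R) : R := \sum_(a : A) `|p a - q a|.
Definition is_dist (p : A -> R) : Prop :=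
  (forall a, 0 <= p a) /\ \sum_(a : A) p a = 1.
End Vec.

(* The current, new and ideal policies are softmaxes of the scores [phi^T theta_k],
   [phi^T theta_{k+1}] and [Q / beta_k + phi^T theta_k], so every log-ratio between two of them is a difference of scores
   plus a constant, and constants vanish when integrated against a difference of
   probability distributions.  Hence the left-hand side equals the right-hand side
   exactly once [- 1/2 |pk1 - pk|_1^2] is replaced by [- KL(pk1 || pk)], and Pinsker's
   inequality finishes the proof.  Pinsker itself follows from the pointwise bound
   [x ln x - x + 1 >= 3 (x - 1)^2 / (2 (x + 2))] and Cauchy-Schwarz with the weights
   [p + 2 q], whose total mass is 3. *)

From HB Require Import structures.
From mathcomp Require Import all_boot all_order all_algebra.
From mathcomp Require Import all_classical all_reals all_analysis.
From mathcomp Require Import lra ring.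
Set Implicit Arguments.
Unset Strict Implicit.
Unset Printing Implicit Defensive.
Import Order.TTheory GRing.Theory Num.Theory numFieldNormedType.Exports.
Local Open Scope classical_set_scope.
Local Open Scope ring_scope.

Section DeriveSign.
Variables (R : realType) (f f' : R -> R) (a : R).
Hypothesis df : forall y, a < y -> is_derive y 1 f (f' y).

Lemma derive_sign_min (x0 x : R) :
  (forall y, a < y -> 0 <= (y - x0) * f' y) -> a < x0 -> a < x -> f x0 <= f x.
Proof.
move=> sgn ax0 ax.
have cf u v : a < u -> {within `[u, v], continuous f}.
  move=> au; apply: derivable_within_continuous => y.
  by rewrite in_itv /= => /andP[uy _]; case: (df (lt_le_trans au uy)).
have [xx0|x0x|->] := ltgtP x x0; last by [].
- have [c + E] := MVT xx0 (fun c cI => df (lt_trans ax (andP cI).1)) (cf _ x0 ax).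
  rewrite in_itv /= => /andP[xc cx0].
  have : f' c <= 0.
    by rewrite -(nmulr_rge0 (f' c) (_ : c - x0 < 0)) ?subr_lt0 ?sgn ?(lt_trans ax).
  nra.
- have [c + E] := MVT x0x (fun c cI => df (lt_trans ax0 (andP cI).1)) (cf _ x ax0).
  rewrite in_itv /= => /andP[x0c cx].
  have : 0 <= f' c.
    by rewrite -(pmulr_rge0 (f' c) (_ : 0 < c - x0)) ?subr_gt0 ?sgn ?(lt_trans ax0).
  nra.
Qed.

End DeriveSign.

Section PinskerPointwise.
Variable R : realType.

(* [x * pinsker_aux x = x ln x - x + 1 - 3 (x - 1)^2 / (2 (x + 2))]; dividing by [x]
   makes the derivative [(x - 1)^3 / (x^2 (x + 2)^2)], which has the sign of [x - 1]. *)
Definition pinsker_aux (y : R) : R :=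
  ln y + 4^-1 * y^-1 + (27 / 4) * (y + 2)^-1 - 5 / 2.

Lemma is_derive_pinsker_aux (y : R) : 0 < y ->
  is_derive y 1 pinsker_aux ((y - 1) ^+ 3 / (y ^+ 2 * (y + 2) ^+ 2)).
Proof.
move=> y0.
have y2 : y + 2 != 0 by rewrite lt0r_neq0 //; lra.
have := is_deriveB (is_deriveD (is_deriveD (is_derive1_ln y0)
    (is_deriveZ (4^-1 : R) (is_deriveV (lt0r_neq0 y0) (is_derive_id y (1 : R)))))
    (is_deriveZ (27 / 4 : R)
      (@is_deriveV R (shift 2) y 1 1 y2 (is_derive_shift y (1 : R) 2))))
  (is_derive_cst (5 / 2 : R) y 1).
move/is_derive_eq; apply.
rewrite /shift /= /GRing.scale /= !mulr1 subr0 expr2; field.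
by rewrite y2 lt0r_neq0.
Qed.

Lemma pinsker_aux_ge0 (y : R) : 0 < y -> 0 <= pinsker_aux y.
Proof.
move=> y0; have <- : pinsker_aux 1 = 0 by rewrite /pinsker_aux ln1 invr1; field.
apply: (derive_sign_min is_derive_pinsker_aux) => // z z0.
rewrite mulrA -exprS.
by apply: divr_ge0; [|apply: mulr_ge0]; exact: exprn_even_ge0.
Qed.

Lemma xlnx_ge (x : R) : 0 < x -> 3 * (x - 1) ^+ 2 / (2 * (x + 2)) <= x * ln x - x + 1.
Proof.
move=> x0; have x2 : x + 2 != 0 by rewrite lt0r_neq0 //; lra.
have -> : 3 * (x - 1) ^+ 2 / (2 * (x + 2)) = x * ln x - x + 1 - x * pinsker_aux x.
  by rewrite /pinsker_aux; field; rewrite x2 lt0r_neq0.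
by rewrite lerBlDr lerDl; exact: mulr_ge0 (ltW x0) (pinsker_aux_ge0 x0).
Qed.

Lemma mul_ln_div_ge (p q : R) : 0 <= p -> 0 < q ->
  3 * (p - q) ^+ 2 / (2 * (p + 2 * q)) <= p * ln (p / q) - p + q.
Proof.
rewrite le_eqVlt => /predU1P[<- q0|p0 q0].
  have -> : 3 * (0 - q) ^+ 2 / (2 * (0 + 2 * q)) = 3 / 4 * q.
    by field; rewrite lt0r_neq0.
  rewrite mul0r subrr add0r; lra.
have pq : p + 2 * q != 0 by rewrite lt0r_neq0 //; lra.
have q0' : q != 0 by rewrite lt0r_neq0.
have -> : 3 * (p - q) ^+ 2 / (2 * (p + 2 * q)) =
    q * (3 * (p / q - 1) ^+ 2 / (2 * (p / q + 2))).
  by field; rewrite pq q0'.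
have -> : p * ln (p / q) - p + q = q * (p / q * ln (p / q) - p / q + 1) by field.
by rewrite ler_pM2l // xlnx_ge // divr_gt0.
Qed.
End PinskerPointwise.

Lemma cauchy_schwarz_engel (R : realFieldType) (A : finType) (a w : A -> R) :
  (forall i, 0 < w i) -> 0 < \sum_i w i ->
  (\sum_i a i) ^+ 2 <= (\sum_i w i) * \sum_i a i ^+ 2 / w i.
Proof.
move=> w_gt0 sw_gt0; set sa := \sum_i a i; set sw := \sum_i w i.
pose m := sa / sw.
have sw0 : sw != 0 by rewrite lt0r_neq0.
have : 0 <= \sum_i (a i - m * w i) ^+ 2 / w i.
  by apply: sumr_ge0 => i _; rewrite divr_ge0 ?sqr_ge0 ?ltW.
have -> : \sum_i (a i - m * w i) ^+ 2 / w i =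
    \sum_i a i ^+ 2 / w i - 2 * m * sa + m ^+ 2 * sw.
  rewrite /sa /sw !mulr_sumr -sumrB -big_split /=; apply: eq_bigr => i _.
  by field; rewrite lt0r_neq0.
rewrite -(pmulr_rge0 _ sw_gt0).
have -> : sw * (\sum_i a i ^+ 2 / w i - 2 * m * sa + m ^+ 2 * sw) =
    sw * \sum_i a i ^+ 2 / w i - sa ^+ 2 by rewrite /m; field.
by rewrite subr_ge0.
Qed.

Lemma pinsker (R : realType) (A : finType) (p q : A -> R) :
  is_dist p -> is_dist q -> (forall a, 0 < q a) ->
  2^-1 * l1dist p q ^+ 2 <= KL p q.
Proof.
move=> [p_ge0 sp] [_ sq] q_gt0.
have w_gt0 a : 0 < p a + 2 * q a by rewrite ltr_wpDl ?mulr_gt0.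
have sw : \sum_a (p a + 2 * q a) = 3 by rewrite big_split /= -mulr_sumr sp sq; lra.
have KL_ge : 2^-1 * (3 * \sum_a `|p a - q a| ^+ 2 / (p a + 2 * q a)) <= KL p q.
  have -> : KL p q = \sum_a (p a * ln (p a / q a) - p a + q a).
    by rewrite big_split /= sumrB sp sq subrK.
  rewrite !mulr_sumr; apply: ler_sum => a _.
  rewrite real_normK ?num_real //.
  rewrite (_ : 2^-1 * _ = 3 * (p a - q a) ^+ 2 / (2 * (p a + 2 * q a))).
    exact: mul_ln_div_ge.
  by field; rewrite lt0r_neq0.
apply: le_trans KL_ge; rewrite ler_pM2l ?invr_gt0 // -sw.
by apply: cauchy_schwarz_engel; rewrite // sw.
Qed.

Lemma inner_addr_cst (R : realType) (A : finType) (f x y : A -> R) (k : R) :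
  \sum_a x a = \sum_a y a ->
  inner (fun a => f a + k) (fun a => x a - y a) = inner f (fun a => x a - y a).
Proof.
move=> sxy; rewrite /inner (eq_bigr (fun a => f a * (x a - y a) + k * (x a - y a))).
  by rewrite big_split /= -mulr_sumr sumrB sxy subrr mulr0 addr0.
by move=> a _; rewrite mulrDl.
Qed.

Section Softmax.
Variables (R : realType) (A : finType).
Implicit Types (c : A -> R) (p q r : A -> R).

Definition softmax c (a : A) : R := expR (c a) / \sum_b expR (c b).

Lemma sum_expR_gt0 c (a : A) : 0 < \sum_b expR (c b).
Proof.
rewrite (bigD1 a) //= ltr_pwDl ?expR_gt0 //.
by apply: sumr_ge0 => b _; exact: expR_ge0.
Qed.

Lemma softmax_gt0 c a : 0 < softmax c a.
Proof. by rewrite divr_gt0 ?expR_gt0 ?(sum_expR_gt0 _ a). Qed.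

Lemma is_dist_card_gt0 r : is_dist r -> (0 < #|A|)%N.
Proof.
case=> _ r1; rewrite lt0n; apply: contra_eqN r1 => /eqP/card0_eq A0.
by rewrite big_pred0 // eq_sym oner_eq0.
Qed.

Lemma sum_softmax c : (0 < #|A|)%N -> \sum_a softmax c a = 1.
Proof.
by case/card_gt0P => a0 _; rewrite -mulr_suml mulfV // lt0r_neq0 // (sum_expR_gt0 _ a0).
Qed.

Lemma softmax_dist c : (0 < #|A|)%N -> is_dist (softmax c).
Proof. by move=> A_gt0; split=> [a|]; [exact/ltW/softmax_gt0 | exact: sum_softmax]. Qed.

Lemma ln_softmax_div c c' a : ln (softmax c a / softmax c' a) =
  c a - c' a + (ln (\sum_b expR (c' b)) - ln (\sum_b expR (c b))).
Proof.
rewrite ln_div ?posrE ?softmax_gt0 // !ln_div ?posrE ?expR_gt0 ?(sum_expR_gt0 _ a) //.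
by rewrite !expRK; ring.
Qed.

Lemma KL_sub r p q : (forall a, 0 <= r a) -> (forall a, 0 < p a) -> (forall a, 0 < q a) ->
  KL r q - KL r p = inner (fun a => ln (p a / q a)) r.
Proof.
move=> r_ge0 p_gt0 q_gt0; rewrite /KL /inner -sumrB; apply: eq_bigr => a _.
have := r_ge0 a; rewrite le_eqVlt => /predU1P[<-|r_gt0].
  by rewrite !mul0r subrr mulr0.
by rewrite !ln_div ?posrE //; ring.
Qed.

Lemma softmax_three_point c c' (h : A -> R) r : is_dist r ->
  KL r (softmax c') - KL r (softmax c) =
    inner (fun a => ln (softmax c' a / softmax (fun b => h b + c b) a))
          (fun a => softmax c a - r a)
    + inner h (fun a => softmax c a - r a)
    - KL (softmax c') (softmax c)
    - inner (fun a => c' a - c a) (fun a => softmax c a - softmax c' a).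
Proof.
move=> r_dist; have A_gt0 := is_dist_card_gt0 r_dist; case: r_dist => r_ge0 r_sum.
rewrite KL_sub //; try exact: softmax_gt0.
apply/eqP; rewrite -subr_eq0; apply/eqP.
rewrite /inner /KL -big_split /= -!sumrB.
pose K1 := ln (\sum_b expR (c b)) - ln (\sum_b expR (c' b)).
pose K2 := ln (\sum_b expR (c' b)) - ln (\sum_b expR (h b + c b)).
rewrite (eq_bigr (fun a => K1 * (softmax c' a - r a) + K2 * (softmax c a - r a))).
  by rewrite big_split /= -!mulr_sumr !sumrB !sum_softmax // r_sum !subrr !mulr0 addr0.
by move=> a _; rewrite !ln_softmax_div /K1 /K2; ring.
Qed.

End Softmax.

Lemma dotfB (R : realType) (d : nat) (theta theta' v : 'I_d -> R) :
  dotf (fun i => theta i - theta' i) v = dotf theta v - dotf theta' v.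
Proof. by rewrite /dotf -sumrB; apply: eq_bigr => i _; rewrite mulrBr. Qed.

Lemma loglinE (R : realType) (S A : finType) (d : nat) phi (theta : 'I_d -> R) (s : S) pre :
  loglin phi theta s pre = softmax (fun a : A => dotf theta (phi s pre a)).
Proof. by []. Qed.

Lemma ideal_updateE (R : realType) (S A : finType) (d : nat) (beta : R) Q phi
    (theta : 'I_d -> R) (s : S) pre :
  ideal_update beta Q phi theta s pre =
  softmax (fun a : A => Q s pre a / beta + dotf theta (phi s pre a)).
Proof. by []. Qed.

Theorem lemma7 (R : realType) (S A : finType) (d N : nat) (m : 'I_N)
  (phi : S -> seq A -> A -> 'I_d -> R)
  (Qm : S -> seq A -> A -> R) (Qm1 : S -> seq A -> R)
  (theta_k theta_k1 : 'I_d -> R) (beta_k : R)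
  (pistar : S -> seq A -> A -> R) :
  0 < beta_k ->
  (* pi_*^m(. | s, a^{1:m-1}) is a probability distribution on A *)
  (forall s pre, size pre = val m -> is_dist (pistar s pre)) ->
  (* Q^{1:m-1}_{pi_k}(s,a^{1:m-1}) = E_{a^m ~ pi_{theta_k}^m} Q^{1:m}_{pi_k}(s,a^{1:m}) *)
  (forall s pre, size pre = val m ->
     Qm1 s pre = \sum_(a : A) loglin phi theta_k s pre a * Qm s pre a) ->
  forall (s : S) (pre : seq A), size pre = val m ->
  let pk := loglin phi theta_k s pre in
  let pk1 := loglin phi theta_k1 s pre in
  let pid := ideal_update beta_k Qm phi theta_k s pre in
  let ps := pistar s pre in
  KL ps pk1 - KL ps pk <=
    inner (fun a => ln (pk1 a / pid a)) (fun a => pk a - ps a)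
    + beta_k^-1 * inner (advantage Qm Qm1 s pre) (fun a => pk a - ps a)
    - 2^-1 * (l1dist pk1 pk) ^+ 2
    - inner (fun a => dotf (fun i => theta_k1 i - theta_k i) (phi s pre a))
            (fun a => pk a - pk1 a).
Proof.
move=> beta_gt0 pistar_dist _ s pre size_pre; cbv zeta.
have ps_dist := pistar_dist s pre size_pre; have [_ ps_sum] := ps_dist.
have A_gt0 := is_dist_card_gt0 ps_dist.
rewrite !loglinE ideal_updateE (softmax_three_point _ _ (fun a => Qm s pre a / beta_k) ps_dist).
set c := fun a => dotf theta_k (phi s pre a).
set h := fun a => Qm s pre a / beta_k.
have adv : beta_k^-1 * inner (advantage Qm Qm1 s pre) (fun a => softmax c a - pistar s pre a)
    = inner h (fun a => softmax c a - pistar s pre a).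
  rewrite -(inner_addr_cst h (- (beta_k^-1 * Qm1 s pre))); last by rewrite sum_softmax.
  by rewrite /inner mulr_sumr; apply: eq_bigr => a _; rewrite /advantage /h; ring.
have dotf_diff : (fun a => dotf (fun i => theta_k1 i - theta_k i) (phi s pre a)) =
    (fun a => dotf theta_k1 (phi s pre a) - c a).
  by apply/funext => a; rewrite dotfB.
rewrite adv dotf_diff; apply: lerB => //; apply: lerB; first by rewrite lexx.
by apply: pinsker; [exact: softmax_dist..|exact: softmax_gt0].
Qed.
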